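(* Let $n\ge2$ and let $M'\subset\mathbb{C}^{n+1}$ be a real-analytic or smooth real hypersurface through $0$ defined near $0$ by $$\rho(W,\bar W)=-\mathrm{Im}\,w_{n+1}+\sum_{j=1}^{n-1}|w_j|^2+\phi(W,\bar W),\qquad \phi=O(|W|^3),$$ $W=(w_1,\dots,w_{n+1})$. For $1\le k\le n$ let $$\Lambda_k=2i\Big(\frac{\partial\rho}{\partial\bar w_{n+1}}\frac{\partial}{\partial\bar w_k}-\frac{\partial\rho}{\partial\bar w_k}\frac{\partial}{\partial\bar w_{n+1}}\Big),$$ let $\rho_W=(\partial\rho/\partial w_1,\dots,\partial\rho/\partial w_{n+1})$, and for $1\le i_1\le\dots\le i_l\le n$ let $\Delta_{i_1\dots i_l}(q)$ be the determinant of the $(n+1)\times(n+1)$ matrix whose rows are $\rho_W,\Lambda_1\rho_W,\dots,\Lambda_{n-1}\rho_W,\Lambda_{i_1}\cdots\Lambda_{i_l}\rho_W$, evaluated at $q\in M'$. Assume $M'$ is $l$-nondegenerate at $0$ for some $l\ge2$. Then there exist $1\le i_1\le\dots\le i_l\le n$ such that $\Delta_{i_1\dots i_l}(0)\ne0$.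
   Context: The $\Lambda_k$, $1\le k\le n$, form a local basis of CR vector fields of $M'$. For $E_l(p)=\mathrm{Span}_{\mathbb{C}}\{\Lambda^\alpha\rho_W(p):0\le|\alpha|\le l\}$ with $\Lambda^\alpha=\Lambda_1^{\alpha_1}\cdots\Lambda_n^{\alpha_n}$, $M'$ is $k$-nondegenerate at $p$ if $E_{k-1}(p)\ne E_k(p)=\mathbb{C}^{n+1}$. *)

From HB Require Import structures.
From mathcomp Require Import all_boot all_order all_algebra.
From mathcomp Require Import all_classical all_reals all_analysis.
From mathcomp Require Import complex.
Set Implicit Arguments. Unset Strict Implicit. Unset Printing Implicit Defensive.
Import Order.TTheory GRing.Theory Num.Theory.
Import numFieldNormedType.Exports.
Local Open Scope ring_scope.
Local Open Scope complex_scope.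

Section Defs.
Variables (R : realType) (n : nat).

(* Real coordinates of C^{n+1}: a point W is a row vector p with
   Re w_j = p 0 (lshift _ j) and Im w_j = p 0 (rshift _ j), j : 'I_(n.+1),
   where index j (0-based) corresponds to w_{j+1}; w_{n+1} is ord_max. *)
Definition Pt := 'rV[R]_(n.+1 + n.+1).
Definition xc (j : 'I_n.+1) (p : Pt) : R := p 0 (lshift n.+1 j).
Definition yc (j : 'I_n.+1) (p : Pt) : R := p 0 (rshift n.+1 j).
Definition ex (j : 'I_n.+1) : Pt := delta_mx 0 (lshift n.+1 j).
Definition ey (j : 'I_n.+1) : Pt := delta_mx 0 (rshift n.+1 j).

Definition CFun := Pt -> R[i].

Definition partial (v : Pt) (f : CFun) : CFun := fun p =>
  Complex ('D_v (fun q => complex.Re (f q)) p) ('D_v (fun q => complex.Im (f q)) p).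

Definition dw (j : 'I_n.+1) (f : CFun) : CFun := fun p =>
  (partial (ex j) f p - 'i * partial (ey j) f p) / 2%:R.
Definition dwbar (j : 'I_n.+1) (f : CFun) : CFun := fun p =>
  (partial (ex j) f p + 'i * partial (ey j) f p) / 2%:R.

Definition liftC (rho : Pt -> R) : CFun := fun p => (rho p)%:C.

(* Lambda_{k+1} for k : nat (0-based), acting on complex-valued functions:
   Lambda_k = 2i (rho_{wbar_{n+1}} d/dwbar_k - rho_{wbar_k} d/dwbar_{n+1}) *)
Definition Lam (rho : Pt -> R) (k : nat) (f : CFun) : CFun := fun p =>
  2%:R * 'i * (dwbar ord_max (liftC rho) p * dwbar (inord k) f p
              - dwbar (inord k) (liftC rho) p * dwbar ord_max f p).

Definition rhoW (rho : Pt -> R) : 'I_n.+1 -> CFun := fun j => dw j (liftC rho).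

(* Lambda^alpha = Lambda_1^{alpha_1} ... Lambda_n^{alpha_n} (Lambda_n applied first) *)
Definition Lam_alpha (rho : Pt -> R) (l : nat) (alpha : {ffun 'I_n -> 'I_l.+1})
  (f : CFun) : CFun :=
  foldr (fun (i : 'I_n) g => iter (alpha i) (Lam rho i) g) f (enum 'I_n).

Definition Lam_seq (rho : Pt -> R) (s : seq 'I_n) (f : CFun) : CFun :=
  foldr (fun (i : 'I_n) g => Lam rho i g) f s.

(* E_l(p) = Span_C { Lambda^alpha rho_W (p) : |alpha| <= l }, as a subspace
   (row space) of C^{n+1} = 'rV[R[i]]_(n.+1). *)
Definition Espace (rho : Pt -> R) (l : nat) (p : Pt) : 'M[R[i]]_(n.+1) :=
  (\sum_(alpha : {ffun 'I_n -> 'I_l.+1} | (\sum_i (alpha i : nat) <= l)%N)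
     <<\row_j Lam_alpha rho alpha (rhoW rho j) p>>)%MS.

Definition k_nondegenerate (rho : Pt -> R) (k : nat) (p : Pt) : Prop :=
  ~~ (Espace rho k.-1 p == Espace rho k p)%MS /\ (Espace rho k p == 1%:M)%MS.

Definition Delta_mx (rho : Pt -> R) (s : seq 'I_n) (q : Pt) : 'M[R[i]]_(n.+1) :=
  \matrix_(r < n.+1, j < n.+1)
    (if (r == 0 :> nat) then rhoW rho j q
     else if (r < n)%N then Lam rho r.-1 (rhoW rho j) q
     else Lam_seq rho s (rhoW rho j) q).

Definition iterD (ds : seq 'I_(n.+1 + n.+1)) (f : Pt -> R) : Pt -> R :=
  foldr (fun d g => fun p => 'D_(delta_mx 0 d : Pt) g p) f ds.

Definition smooth_near0 (rho : Pt -> R) : Prop :=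
  exists2 eps : R, 0 < eps &
    forall (ds : seq 'I_(n.+1 + n.+1)) (p : Pt), `|p| < eps ->
      differentiable (iterD ds rho) p.

Definition model (p : Pt) : R :=
  - yc ord_max p + \sum_(j < n.+1 | (j < n.-1)%N) (xc j p ^+ 2 + yc j p ^+ 2).

End Defs.

From HB Require Import structures.
From mathcomp Require Import all_boot all_order all_algebra.
From mathcomp Require Import all_classical all_reals all_analysis.
From mathcomp Require Import complex.
From mathcomp Require Import ring lra zify.
Import Order.TTheory GRing.Theory Num.Theory.
Import numFieldNormedType.Exports.
Local Open Scope ring_scope.

(* Because rho agrees with the model -Im w_(n+1) + sum_(j < n) |w_j|^2 up to O(|W|^3), its
   derivatives of order at most two at 0 are those of the model; each is extracted from the
   cubic bound by applying the mean value theorem twice along lines.  Hence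
   rho_W(0) = (0, ..., 0, i/2) and Lambda_k rho_W(0) = e_k for k < n, so the first n rows of
   the determinant are independent and span a hyperplane H contained in E_1(0), hence in
   E_(l-1)(0).  By l-nondegeneracy E_(l-1)(0) is not everything, so it equals H, while
   E_l(0) = C^(n+1).  Thus some Lambda^alpha rho_W(0) with |alpha| = l, which is
   Lambda_(i_1) ... Lambda_(i_l) rho_W(0) for a sorted sequence of indices, lies outside H,
   and then the determinant does not vanish. *)

Section DirectionalDerivatives.
Context {R : realType} {V : normedModType R}.

Lemma is_derive_eps (f : V -> R) (a v : V) (L : R) :
  (forall e, 0 < e -> exists2 d, 0 < d & forall h, h != 0 -> `|h| < d ->
     `|h^-1 * (f (h *: v + a) - f a) - L| <= e) ->
  is_derive a v f L.
Proof.
move=> Hf; suff lim_quot : ((fun h : R => h^-1 *: (f (h *: v + a) - f a)) @ 0^' --> L)%classic.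
  by split; [apply/cvg_ex; exists L | exact: cvg_lim].
apply/cvgrPdist_le => e e0; have [d d0 Hd] := Hf e e0.
near=> h; rewrite distrC; apply: Hd.
  by near: h; exact: nbhs_dnbhs_neq.
by near: h; apply: dnbhs0_lt.
Unshelve. all: by end_near. Qed.

Lemma is_derive_quadratic (f : V -> R) (p v : V) (L Q : R) :
  (forall h, f (h *: v + p) = f p + h * L + h ^+ 2 * Q) -> is_derive p v f L.
Proof.
move=> fE; apply: is_derive_eps => e e0.
exists (e / (`|Q| + 1)); first by rewrite divr_gt0 // ltr_pwDr.
move=> h h0; rewrite ltr_pdivlMr ?ltr_pwDr // => hlt.
have -> : h^-1 * (f (h *: v + p) - f p) - L = h * Q by rewrite fE; field.
rewrite normrM; apply: le_trans (ltW hlt); rewrite ler_wpM2l //; lra.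
Qed.

Lemma is_derive_line (f : V -> R) (p v : V) (x L : R) :
  is_derive (x *: v + p) v f L -> is_derive x 1 (fun s : R => f (s *: v + p)) L.
Proof.
move=> [df dfE].
have quotE : (fun h : R => h^-1 *: (((fun s => f (s *: v + p)) \o shift x) h%:A
    - f (x *: v + p))) = (fun h => h^-1 *: ((f \o shift (x *: v + p)) (h *: v) - f (x *: v + p))).
  by apply/funext => h /=; rewrite -[h%:A]/(h * 1) mulr1 scalerDl addrA.
by split; rewrite /derivable /derive /= quotE.
Qed.

Lemma continuous_bounded_near (F : V -> R) (a : V) : {for a, continuous F} ->
  exists2 d, 0 < d & forall q, `|q - a| < d -> `|F q| <= `|F a| + 1.
Proof.
move=> /cvgrPdist_lt/(_ 1 ltr01) /nbhs_normP [d d0 Hd]; exists d => // q qa.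
have /= Fq : `|F a - F q| < 1 by apply: Hd; rewrite /= -opprB normrN.
have -> : F q = F a - (F a - F q) by rewrite opprB addrC subrK.
by apply: (le_trans (ler_normB _ _)); rewrite lerD2l ltW.
Qed.

End DirectionalDerivatives.

Lemma norm_derive0_le (R : realType) (f f1 f2 : R -> R) (s M : R) : 0 < s ->
  (forall x, x \in `[0, s] -> is_derive x 1 f (f1 x)) ->
  (forall x, x \in `[0, s] -> is_derive x 1 f1 (f2 x)) ->
  (forall x, x \in `[0, s] -> `|f2 x| <= M) ->
  `|f1 0| <= (`|f s| + `|f 0|) / s + s * M.
Proof.
move=> s0 df df1 f2M.
have in_s x c : x \in `]0, c[ -> c <= s -> x \in `[0, s].
  by rewrite !in_itv /= => /andP[x0 xc] cs; rewrite ltW // ltW // (lt_le_trans xc).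
have [c1 c1in fE] := @MVT R f f1 0 s s0 (fun x xin => df x (in_s x s xin (lexx s)))
  (derivable_within_continuous (fun x xin => @ex_derive _ _ _ _ _ _ _ (df x xin))).
have c10 : 0 < c1 by move: c1in; rewrite in_itv /= => /andP[].
have c1s : c1 <= s by move: c1in; rewrite in_itv /= => /andP[_ /ltW].
have in_c1 x : x \in `[0, c1] -> x \in `[0, s].
  by rewrite !in_itv /= => /andP[-> /le_trans ->].
have [c2 c2in f1E] := @MVT R f1 f2 0 c1 c10 (fun x xin => df1 x (in_s x c1 xin c1s))
  (derivable_within_continuous (fun x xin => @ex_derive _ _ _ _ _ _ _ (df1 x (in_c1 x xin)))).
have -> : f1 0 = (f s - f 0) / s - f2 c2 * c1.
  by move: fE f1E; rewrite !subr0 => -> <-; field; rewrite gt_eqF.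
apply: le_trans (ler_normB _ _) _; apply: lerD.
  rewrite normrM normfV (gtr0_norm s0) ler_wpM2r ?invr_ge0 ?(ltW s0) //.
  exact: ler_normB.
rewrite normrM (gtr0_norm c10) mulrC.
by apply: ler_pM => //; [exact: ltW | exact: f2M (in_s _ _ c2in c1s)].
Qed.

Section CubicRemainder.
Context {R : realType} {V : normedModType R} {g g1 g2 : V -> R} {u v : V} {r C M : R}.
Hypotheses (r_gt0 : 0 < r) (C_gt0 : 0 < C) (u_le1 : `|u| <= 1) (v_le1 : `|v| <= 1).
Hypothesis g_cubic : forall q, `|q| < r -> `|g q| <= C * `|q| ^+ 3.
Hypothesis g_derive : forall q, `|q| < r -> is_derive q v g (g1 q).
Hypothesis g1_derive : forall q, `|q| < r -> is_derive q v g1 (g2 q).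
Hypothesis g2_bound : forall q, `|q| < r -> `|g2 q| <= M.

Let M_ge0 : 0 <= M.
Proof. by apply: le_trans (normr_ge0 (g2 0)) (g2_bound _ _); rewrite normr0. Qed.

Let norm_line (x t : R) : `|x *: v + t *: u| <= `|x| + `|t|.
Proof.
apply: le_trans (ler_normD _ _) _; rewrite !normrZ.
by apply: lerD; rewrite -[leRHS]mulr1 ler_wpM2l.
Qed.

Lemma cubic_remainder_derive_bound (t s : R) : 0 < s -> `|t| + s < r ->
  `|g1 (t *: u)| <= (C * (`|t| + s) ^+ 3 + C * `|t| ^+ 3) / s + s * M.
Proof.
move=> s0 tsr.
have line_in x : x \in `[0, s] -> `|x *: v + t *: u| < r.
  rewrite in_itv /= => /andP[x0 xs]; apply: le_lt_trans (norm_line x t) _.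
  by rewrite ger0_norm //; lra.
have line0 : g1 (t *: u) = g1 (0 *: v + t *: u) by rewrite scale0r add0r.
rewrite line0; apply: le_trans (@norm_derive0_le R (fun x => g (x *: v + t *: u))
  (fun x => g1 (x *: v + t *: u)) (fun x => g2 (x *: v + t *: u)) s M s0 _ _ _) _.
- by move=> x /line_in xr; apply/is_derive_line/g_derive.
- by move=> x /line_in xr; apply/is_derive_line/g1_derive.
- by move=> x /line_in /g2_bound.
rewrite lerD2r ler_wpM2r ?invr_ge0 ?(ltW s0) //; apply: lerD.
  apply: le_trans (g_cubic _ (line_in s _)) _; first by rewrite in_itv /= lexx ltW.
  rewrite ler_wpM2l ?(ltW C_gt0) // lerXn2r ?nnegrE ?addr_ge0 ?(ltW s0) //.
  by apply: le_trans (norm_line s t) _; rewrite (gtr0_norm s0) addrC.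
apply: le_trans (g_cubic _ (line_in 0 _)) _; first by rewrite in_itv /= lexx ltW.
rewrite ler_wpM2l ?(ltW C_gt0) // lerXn2r ?nnegrE //.
by apply: le_trans (norm_line 0 t) _; rewrite normr0 add0r.
Qed.

Lemma cubic_remainder_derive0 : g1 0 = 0.
Proof.
(* |g1 0| <= C s^2 + s M for every small s > 0. *)
apply/normr0_eq0/eqP; rewrite eq_le normr_ge0 andbT; apply/ler_addgt0Pr => e e0; rewrite add0r.
pose s := Num.min (r / 2) (e / (C * r + M + 1)).
have K0 : 0 < C * r + M + 1 by rewrite ltr_wpDl // addr_ge0 // mulr_ge0 ?ltW.
have s0 : 0 < s by rewrite lt_min !divr_gt0.
have sr : s <= r / 2 by rewrite ge_min lexx.
have se : s * (C * r + M + 1) <= e.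
  by rewrite -ler_pdivlMr // ge_min lexx orbT.
have sr' : s < r by apply: le_lt_trans sr _; rewrite ltr_pdivrMr // ltr_pMr // ltr1n.
have := @cubic_remainder_derive_bound 0 s s0.
rewrite normr0 add0r scale0r => /(_ sr') bound; apply: le_trans bound _.
have -> : (C * s ^+ 3 + C * 0 ^+ 3) / s + s * M = s * (C * s + M).
  by field; rewrite gt_eqF.
apply: le_trans se; rewrite ler_wpM2l ?ltW //.
have : C * s <= C * r by rewrite ler_wpM2l ?ltW //; lra.
lra.
Qed.

Lemma cubic_remainder_derive2 : is_derive 0 u g1 0.
Proof.
(* With s = k |h|, the bound reads |g1 (h u)| <= |h| (C |h| ((1 + k)^3 + 1) / k + k M). *)
apply: is_derive_eps => e e0; rewrite cubic_remainder_derive0.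
pose k := Num.min 1 (e / (2 * M + 1)).
have k0 : 0 < k by rewrite lt_min ltr01 divr_gt0 // ltr_wpDl // mulr_ge0.
have k1 : k <= 1 by rewrite ge_min lexx.
have kM : k * M <= e / 2.
  have : k * (2 * M + 1) <= e by rewrite -ler_pdivlMr ?ge_min ?lexx ?orbT // ltr_wpDl ?mulr_ge0.
  have : 0 <= k by exact: ltW.
  nra.
exists (Num.min (r / 2) (e * k / (18 * C))).
  by rewrite lt_min divr_gt0 // divr_gt0 ?mulr_gt0.
move=> h h0; rewrite lt_min => /andP[hr he].
have a0 : 0 < `|h| by rewrite normr_gt0.
rewrite addr0 !subr0 normrM normfV mulrC ler_pdivrMr //.
have ka0 : 0 < k * `|h| by rewrite mulr_gt0.
apply: le_trans (@cubic_remainder_derive_bound h (k * `|h|) ka0 _) _.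
  by move: hr; rewrite ltr_pdivlMr //; nra.
set a := `|h| in a0 he ka0 *.
have -> : (C * (a + k * a) ^+ 3 + C * a ^+ 3) / (k * a) + k * a * M =
          a * (C * a * ((1 + k) ^+ 3 + 1) / k + k * M).
  by field; rewrite ?gt_eqF.
rewrite [e * a]mulrC ler_pM2l //.
have k3 : (1 + k) ^+ 3 + 1 <= 9.
  have : (1 + k) ^+ 3 <= 2 ^+ 3 by rewrite lerXn2r ?nnegrE //; lra.
  rewrite [2 ^+ 3](_ : _ = 8 :> R); first lra.
  by rewrite !exprS expr0; ring.
have : C * a * ((1 + k) ^+ 3 + 1) / k <= e / 2.
  rewrite ler_pdivrMr // -mulrA; apply: (@le_trans _ _ (C * (a * 9))).
    by rewrite ler_pM2l // ler_pM2l.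
  by move: he; rewrite ltr_pdivlMr ?mulr_gt0 //; lra.
lra.
Qed.

End CubicRemainder.

Section Model.
Context {R : realType} {n : nat}.
Local Notation Pt := (Pt R n).
Local Notation ex := (@ex R n).
Local Notation ey := (@ey R n).

Definition model_diff (p v : Pt) : R := - yc ord_max v +
  \sum_(j < n.+1 | (j < n.-1)%N) 2 * (xc j p * xc j v + yc j p * yc j v).

Definition model_hess (u v : Pt) : R :=
  \sum_(j < n.+1 | (j < n.-1)%N) 2 * (xc j u * xc j v + yc j u * yc j v).

Lemma xcDZ j (h : R) (v p : Pt) : xc j (h *: v + p) = h * xc j v + xc j p.
Proof. by rewrite /xc !mxE. Qed.

Lemma ycDZ j (h : R) (v p : Pt) : yc j (h *: v + p) = h * yc j v + yc j p.
Proof. by rewrite /yc !mxE. Qed.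

Lemma model_taylor (h : R) (p v : Pt) :
  model (h *: v + p) = model p + h * model_diff p v + h ^+ 2 * (model_hess v v / 2).
Proof.
rewrite /model /model_diff /model_hess ycDZ mulrDr mulr_suml !mulr_sumr.
under eq_bigr do rewrite xcDZ ycDZ.
set P := fun j : 'I_n.+1 => (j < n.-1)%N.
have -> : \sum_(j < n.+1 | P j) ((h * xc j v + xc j p) ^+ 2 + (h * yc j v + yc j p) ^+ 2) =
    \sum_(j < n.+1 | P j) (xc j p ^+ 2 + yc j p ^+ 2) +
    \sum_(j < n.+1 | P j) h * (2 * (xc j p * xc j v + yc j p * yc j v)) +
    \sum_(j < n.+1 | P j) h ^+ 2 * (2 * (xc j v * xc j v + yc j v * yc j v) / 2).
  by rewrite -!big_split; apply: eq_bigr => j _ /=; field.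
ring.
Qed.

Lemma model_diff_affine (h : R) (u p v : Pt) :
  model_diff (h *: u + p) v = model_diff p v + h * model_hess u v.
Proof.
rewrite /model_diff /model_hess mulr_sumr -addrA -big_split /=; congr (_ + _).
by apply: eq_bigr => j _; rewrite xcDZ ycDZ; ring.
Qed.

Lemma is_derive_model (p v : Pt) : is_derive p v (@model R n) (model_diff p v).
Proof. by apply: is_derive_quadratic => h; exact: model_taylor. Qed.

Lemma is_derive_model_diff (p u v : Pt) :
  is_derive p u (model_diff^~ v) (model_hess u v).
Proof.
apply: (@is_derive_quadratic _ _ _ _ _ _ 0) => h.
by rewrite model_diff_affine mulr0 addr0.
Qed.

Lemma xc_ex j k : xc j (ex k) = (j == k)%:R.
Proof. by rewrite /xc mxE eq_shift. Qed.

Lemma yc_ex j k : yc j (ex k) = 0.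
Proof. by rewrite /yc mxE eq_shift andbF. Qed.

Lemma xc_ey j k : xc j (ey k) = 0.
Proof. by rewrite /xc mxE eq_shift andbF. Qed.

Lemma yc_ey j k : yc j (ey k) = (j == k)%:R.
Proof. by rewrite /yc mxE eq_shift. Qed.

Lemma model_diff0 (v : Pt) : model_diff 0 v = - yc ord_max v.
Proof. by rewrite /model_diff big1 ?addr0 // => j _; rewrite /xc /yc !mxE !mul0r addr0 mulr0. Qed.

Lemma model_hess_ex (u : Pt) j : model_hess u (ex j) = 2 * (j < n.-1)%:R * xc j u.
Proof.
rewrite /model_hess big_mkcond (bigD1 j) //= big1 => [|k kj].
  by rewrite xc_ex yc_ex eqxx; case: (j < n.-1)%N; rewrite /=; ring.
by rewrite xc_ex yc_ex (negbTE kj); case: ifP => _; rewrite //=; ring.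
Qed.

Lemma model_hess_ey (u : Pt) j : model_hess u (ey j) = 2 * (j < n.-1)%:R * yc j u.
Proof.
rewrite /model_hess big_mkcond (bigD1 j) //= big1 => [|k kj].
  by rewrite xc_ey yc_ey eqxx; case: (j < n.-1)%N; rewrite /=; ring.
by rewrite xc_ey yc_ey (negbTE kj); case: ifP => _; rewrite //=; ring.
Qed.

End Model.


Lemma norm_delta_mx_le1 {R : realType} {m k : nat} (i : 'I_m) (j : 'I_k) :
  `|delta_mx i j : 'M[R]_(m, k)| <= 1.
Proof.
rewrite -[`|_|]/(mx_norm _) mx_normrE; apply: bigmax_le => // ij _.
by rewrite mxE; case: (_ && _); rewrite ?normr1 ?normr0.
Qed.

Definition model_up_to_cubic {R : realType} {n : nat} (rho : Pt R n -> R) : Prop :=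
  exists2 C : R, 0 < C & exists2 delta : R, 0 < delta &
    forall p : Pt R n, `|p| < delta -> `|rho p - model p| <= C * `|p| ^+ 3.

Section SecondOrderJet.
Context {R : realType} {n : nat} {rho : Pt R n -> R}.
Hypotheses (rho_smooth : smooth_near0 rho) (rho_model : model_up_to_cubic rho).
Local Notation Pt := (Pt R n).

Lemma rho_jet2 (a b : 'I_(n.+1 + n.+1)) :
  'D_('e_b : Pt) rho 0 = model_diff 0 ('e_b : Pt) /\
  'D_('e_a : Pt) ('D_('e_b : Pt) rho) 0 = model_hess ('e_a : Pt) ('e_b : Pt).
Proof.
have [eps eps0 smooth] := rho_smooth; have [C C0 [del del0 cubic]] := rho_model.
set u : Pt := 'e_a; set v : Pt := 'e_b.
have smooth0 := smooth [:: b; b] 0; rewrite normr0 in smooth0.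
have [d0 d00 bound2] :=
  continuous_bounded_near _ _ (differentiable_continuous (smooth0 eps0)).
pose r := Num.min eps (Num.min del d0).
have r_ball (q : Pt) : `|q| < r -> [/\ `|q| < eps, `|q| < del & `|q| < d0].
  by rewrite !lt_min => /and3P[].
have r0 : 0 < r by rewrite !lt_min eps0 del0 d00.
pose g1 := (fun q => 'D_v rho q) - model_diff^~ v.
pose g2 q := 'D_v ('D_v rho) q - model_hess v v.
pose M := `|'D_v ('D_v rho) 0| + 1 + `|model_hess v v|.
have g_cubic (q : Pt) : `|q| < r -> `|(rho - @model R n) q| <= C * `|q| ^+ 3.
  by case/r_ball => _ qd _; exact: cubic.
have g_derive (q : Pt) : `|q| < r -> is_derive q v (rho - @model R n) (g1 q).
  case/r_ball => qe _ _; rewrite [g1 q]/=; apply: is_deriveB (is_derive_model _ _).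
  exact/derivableP/diff_derivable/(smooth [::]).
have g1_derive (q : Pt) : `|q| < r -> is_derive q v g1 (g2 q).
  case/r_ball => qe _ _; rewrite /g2; apply: is_deriveB (is_derive_model_diff _ _ _).
  exact/derivableP/diff_derivable/(smooth [:: b]).
have g2_bound (q : Pt) : `|q| < r -> `|g2 q| <= M.
  case/r_ball => _ _ qd; apply: le_trans (ler_normB _ _) _; rewrite lerD2r.
  by apply: bound2; rewrite subr0.
have u1 : `|u| <= 1 := norm_delta_mx_le1 _ _.
have v1 : `|v| <= 1 := norm_delta_mx_le1 _ _.
have g1_0 := cubic_remainder_derive0 r0 C0 u1 v1 g_cubic g_derive g1_derive g2_bound.
have g1_d := cubic_remainder_derive2 r0 C0 u1 v1 g_cubic g_derive g1_derive g2_bound.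
split; first by apply/eqP; rewrite -subr_eq0; apply/eqP.
have -> : (fun q => 'D_v rho q) = g1 + model_diff^~ v by apply/funext => q; rewrite /g1 /= subrK.
by have [_ ->] := is_deriveD g1_d (is_derive_model_diff 0 u v); rewrite add0r.
Qed.

End SecondOrderJet.

Local Ltac complex_field :=
  apply/eqP; rewrite eq_complex /=; apply/andP; split; apply/eqP; field.

Section WirtingerJet.
Context {R : realType} {n : nat} {rho : Pt R n -> R}.
Hypotheses (rho_smooth : smooth_near0 rho) (rho_model : model_up_to_cubic rho).
Local Notation Pt := (Pt R n).
Local Notation ex := (@ex R n).
Local Notation ey := (@ey R n).
Local Open Scope complex_scope.

Lemma partial_liftC (w q : Pt) : partial w (liftC rho) q = Complex ('D_w rho q) 0.
Proof. by rewrite /partial; congr Complex; exact: derive_cst. Qed.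

Lemma rhoWE j (q : Pt) :
  rhoW rho j q = Complex ('D_(ex j) rho q / 2) (- ('D_(ey j) rho q / 2)).
Proof. by rewrite /rhoW /dw !partial_liftC; complex_field. Qed.

Lemma partial_rhoW (w : Pt) j (q : Pt) :
  derivable ('D_(ex j) rho) q w -> derivable ('D_(ey j) rho) q w ->
  partial w (rhoW rho j) q =
  Complex ('D_w ('D_(ex j) rho) q / 2) (- ('D_w ('D_(ey j) rho) q / 2)).
Proof.
move=> dx dy; rewrite /partial.
have -> : (fun q => complex.Re (rhoW rho j q)) = 2^-1 \o* 'D_(ex j) rho.
  by apply/funext => p; rewrite rhoWE.
have -> : (fun q => complex.Im (rhoW rho j q)) = - 2^-1 \o* 'D_(ey j) rho.
  by apply/funext => p; rewrite rhoWE /= mulrN.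
rewrite (deriveMr _ dx) (deriveMr _ dy).
by congr Complex; rewrite mulrC // mulrN.
Qed.

Lemma derive_rho0_ex j : 'D_(ex j) rho 0 = 0.
Proof. by rewrite (rho_jet2 rho_smooth rho_model ord0 _).1 model_diff0 yc_ex oppr0. Qed.

Lemma derive_rho0_ey j : 'D_(ey j) rho 0 = - (j == ord_max)%:R.
Proof. by rewrite (rho_jet2 rho_smooth rho_model ord0 _).1 model_diff0 yc_ey eq_sym. Qed.

Lemma rhoW0 j : rhoW rho j 0 = Complex 0 ((j == ord_max)%:R / 2).
Proof. by rewrite rhoWE derive_rho0_ex derive_rho0_ey; complex_field. Qed.

Lemma dwbar_rho0 m : dwbar m (liftC rho) 0 = Complex 0 (- ((m == ord_max)%:R / 2)).
Proof. by rewrite /dwbar !partial_liftC derive_rho0_ex derive_rho0_ey; complex_field. Qed.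

Lemma dwbar_rhoW0 m j : dwbar m (rhoW rho j) 0 = Complex ((m == j) && (j < n.-1)%N)%:R 0.
Proof.
have [eps eps0 smooth] := rho_smooth.
have d0 (b : 'I_(n.+1 + n.+1)) (w : Pt) : derivable ('D_('e_b : Pt) rho) 0 w.
  by apply: diff_derivable; apply: (smooth [:: b]); rewrite normr0.
rewrite /dwbar !partial_rhoW; try exact: d0.
rewrite !(rho_jet2 rho_smooth rho_model _ _).2.
rewrite !model_hess_ex !model_hess_ey.
rewrite xc_ex yc_ex xc_ey yc_ey eq_sym.
by case: (m == j); case: (j < n.-1)%N; complex_field.
Qed.

Lemma Lam_rhoW0 (k : nat) j : (k < n)%N ->
  Lam rho k (rhoW rho j) 0 = Complex ((k == j :> nat) && (j < n.-1)%N)%:R 0.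
Proof.
move=> kn; rewrite /Lam !dwbar_rho0 !dwbar_rhoW0 eqxx.
have -> : (inord k == ord_max :> 'I_n.+1) = false.
  by apply/negbTE; rewrite -val_eqE /= inordK ?ltn_eqF // ltnS ltnW.
have -> : (inord k == j :> 'I_n.+1) = (k == j :> nat).
  by rewrite -val_eqE /= inordK // ltnS ltnW.
by case: (k == j :> nat); case: (j < n.-1)%N; case: (ord_max == j); complex_field.
Qed.

End WirtingerJet.

Lemma row_free_scaled_delta (F : fieldType) (m k : nat) (A : 'M[F]_(m, k))
    (col : 'I_m -> 'I_k) (c : 'I_m -> F) :
  injective col -> (forall r, c r != 0) ->
  (forall r j, A r j = c r * (col r == j)%:R) -> row_free A.
Proof.
move=> col_inj c_neq0 AE; rewrite -kermx_eq0; apply/rowV0P => x /sub_kermxP xA0.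
apply/rowP => r; rewrite mxE.
have := congr1 (fun B : 'rV_k => B 0 (col r)) xA0.
rewrite !mxE (bigD1 r) //= big1 => [|s sr]; last first.
  by rewrite AE (inj_eq col_inj) (negbTE sr) !mulr0.
rewrite AE eqxx mulr1 addr0 => /eqP; rewrite mulf_eq0 (negbTE (c_neq0 r)) orbF.
by move/eqP.
Qed.

Section Frame.
Context {R : realType} {n : nat}.
Local Open Scope complex_scope.

Definition frame_mx (rho : Pt R n -> R) (p : Pt R n) : 'M[R[i]]_(n, n.+1) :=
  \matrix_(r < n, j < n.+1)
    (if r == 0 :> nat then rhoW rho j p else Lam rho r.-1 (rhoW rho j) p).

Lemma row_free_frame_mx0 {rho : Pt R n -> R} :
  smooth_near0 rho -> model_up_to_cubic rho -> row_free (frame_mx rho 0).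
Proof.
move=> rho_smooth rho_model.
(* Row 0 is rho_W(0) = (i/2) e_(n+1) and row r > 0 is Lambda_r rho_W(0) = e_r. *)
pose col (r : 'I_n) : 'I_n.+1 := if r == 0 :> nat then ord_max else inord r.-1.
pose c (r : 'I_n) : R[i] := if r == 0 :> nat then Complex 0 2^-1 else 1.
apply: (@row_free_scaled_delta _ _ _ _ col c).
- move=> r s; rewrite /col; have rn := ltn_ord r; have sn := ltn_ord s.
  case: eqP => r0; case: eqP => s0 /(congr1 (@nat_of_ord _)) /= E; apply: ord_inj;
    move: E; rewrite ?inordK; lia.
- by move=> r; rewrite /c; case: ifP => _; rewrite ?oner_neq0 // eq_complex /= invr_eq0 pnatr_eq0 andbF.
move=> r j; rewrite mxE /col /c; case: ifP => [_|/negbT r_neq0].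
  by rewrite rhoW0 // eq_sym; case: (ord_max == j); complex_field.
have rn := ltn_ord r.
rewrite Lam_rhoW0 //; last by lia.
have -> : (inord r.-1 == j :> 'I_n.+1) = (r.-1 == j :> nat).
  by rewrite -val_eqE /= inordK //; lia.
have [rj|rj] := eqVneq r.-1 (j : nat).
  rewrite -rj (_ : (r.-1 < n.-1)%N = true) /=; last by lia.
  by complex_field.
by complex_field.
Qed.

End Frame.

Section MultiIndices.
Context {R : realType} {n : nat}.
Variable rho : Pt R n -> R.
Local Notation ord_sorted := (sorted (fun a b : 'I_n => (a <= b)%N)).

Definition multiindex_seq (f : 'I_n -> nat) : seq 'I_n :=
  flatten [seq nseq (f i) i | i <- enum 'I_n].

Definition Lam_row (s : seq 'I_n) (p : Pt R n) : 'rV[R[i]]_(n.+1) :=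
  \row_j Lam_seq rho s (rhoW rho j) p.

Lemma Lam_seq_cat s1 s2 f : Lam_seq rho (s1 ++ s2) f = Lam_seq rho s1 (Lam_seq rho s2 f).
Proof. by rewrite /Lam_seq foldr_cat. Qed.

Lemma Lam_seq_nseq m i f : Lam_seq rho (nseq m i) f = iter m (Lam rho i) f.
Proof. by elim: m => //= m ->. Qed.

Lemma Lam_alpha_seq l (alpha : {ffun 'I_n -> 'I_l.+1}) f :
  Lam_alpha rho alpha f = Lam_seq rho (multiindex_seq (fun i => alpha i)) f.
Proof.
rewrite /Lam_alpha /multiindex_seq; elim: (enum 'I_n) => //= i s IH.
by rewrite Lam_seq_cat Lam_seq_nseq IH.
Qed.

Lemma size_multiindex_seq (f : 'I_n -> nat) : size (multiindex_seq f) = (\sum_i f i)%N.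
Proof.
rewrite /multiindex_seq size_flatten /shape -map_comp sumnE big_map big_enum.
by apply: eq_bigr => i _; rewrite /= size_nseq.
Qed.

Lemma count_multiindex_seq (f : 'I_n -> nat) i : count_mem i (multiindex_seq f) = f i.
Proof.
rewrite /multiindex_seq count_flatten -map_comp sumnE big_map big_enum /=.
rewrite (bigD1 i) //= big1 => [|k ki]; first by rewrite count_nseq /= eqxx mul1n addn0.
by rewrite count_nseq /= (negbTE ki).
Qed.

Lemma sorted_multiindex_seq (f : 'I_n -> nat) : ord_sorted (multiindex_seq f).
Proof.
have leq_tr : transitive (fun a b : 'I_n => (a <= b)%N) by move=> a b c; apply: leq_trans.
rewrite sorted_pairwise // /multiindex_seq.
have : pairwise (fun a b : 'I_n => (a <= b)%N) (enum 'I_n).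
  by rewrite -sorted_pairwise //; have := iota_sorted 0 n; rewrite -val_enum_ord sorted_map.
elim: (enum 'I_n) => //= i s IH /andP[i_le /IH{}IH].
rewrite pairwise_cat IH andbT; apply/andP; split.
  apply/allrelP => x y /nseqP[-> _] /flattenP[t /mapP[k ks ->] /nseqP[-> _]].
  exact: (allP i_le).
by elim: (f i) => //= m ->; rewrite andbT; apply/allP => x /nseqP[-> _].
Qed.

Lemma multiindex_seq_count (s : seq 'I_n) :
  ord_sorted s -> multiindex_seq (fun i => count_mem i s) = s.
Proof.
move=> s_sorted; apply: (sorted_eq _ _ (sorted_multiindex_seq _) s_sorted).
- by move=> a b c; apply: leq_trans.
- by move=> a b /andP[ab ba]; apply/ord_inj/anti_leq/andP.
by apply/allP => x _ /=; rewrite count_multiindex_seq.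
Qed.

Lemma Lam_row_sub_Espace l (p : Pt R n) (s : seq 'I_n) :
  ord_sorted s -> (size s <= l)%N -> (Lam_row s p <= Espace rho l p)%MS.
Proof.
move=> s_sorted s_le.
pose alpha : {ffun 'I_n -> 'I_l.+1} := [ffun i => inord (count_mem i s)].
have alphaE : (fun i => alpha i : nat) = (fun i => count_mem i s).
  apply/funext => i; rewrite ffunE inordK // ltnS.
  exact: leq_trans (count_size _ _) s_le.
apply: (sumsmx_sup alpha).
  by rewrite -size_multiindex_seq alphaE multiindex_seq_count.
suff -> : Lam_row s p = \row_j Lam_alpha rho alpha (rhoW rho j) p by rewrite genmxE.
by apply/rowP => j; rewrite !mxE Lam_alpha_seq alphaE multiindex_seq_count.
Qed.

Lemma Espace_sub l (p : Pt R n) m (X : 'M[R[i]]_(m, n.+1)) : (0 < l)%N ->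
  (Espace rho l.-1 p <= X)%MS ->
  (forall s, size s = l -> ord_sorted s -> (Lam_row s p <= X)%MS) ->
  (Espace rho l p <= X)%MS.
Proof.
move=> l_gt0 sub_pred sub_top; apply/sumsmx_subP => alpha alpha_le; rewrite genmxE.
have -> : \row_j Lam_alpha rho alpha (rhoW rho j) p =
          Lam_row (multiindex_seq (fun i => alpha i)) p.
  by apply/rowP => j; rewrite !mxE Lam_alpha_seq.
have [lt_l|ge_l] := ltnP (\sum_i alpha i) l.
  apply: submx_trans sub_pred; apply: Lam_row_sub_Espace.
    exact: sorted_multiindex_seq.
  by rewrite size_multiindex_seq -ltnS prednK.
apply: sub_top; last exact: sorted_multiindex_seq.
by rewrite size_multiindex_seq; apply/eqP; rewrite eqn_leq alpha_le.
Qed.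

End MultiIndices.

Lemma row_full_adds_row (F : fieldType) (m : nat) (A : 'M[F]_(m, m.+1)) (v : 'rV[F]_m.+1) :
  row_free A -> ~~ (v <= A)%MS -> row_full (A + v)%MS.
Proof.
move=> A_free v_notin; rewrite /row_full eqn_leq rank_leq_col /=.
have : (A < A + v)%MS by rewrite ltmxE addsmxSl addsmx_sub submx_refl.
by move/rank_ltmx; rewrite (eqP A_free).
Qed.

Lemma row_free_hyperplane_sub {F : fieldType} {m k : nat} {A : 'M[F]_(m, m.+1)}
    {B : 'M[F]_(k, m.+1)} :
  row_free A -> (A <= B)%MS -> ~~ row_full B -> (B <= A)%MS.
Proof.
move=> A_free AB /eqP B_not_full.
rewrite -(geq_leqif (mxrank_leqif_sup AB)) (eqP A_free).
by have := rank_leq_col B; lia.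
Qed.

Section DeltaMatrix.
Context {R : realType} {n : nat}.
Variable rho : Pt R n -> R.

Lemma frame_sub_Espace l (p : Pt R n) : (0 < l)%N -> (frame_mx rho p <= Espace rho l p)%MS.
Proof.
move=> l_gt0; apply/row_subP => r; have rn := ltn_ord r.
have [r0|r0] := eqVneq (r : nat) 0.
  have -> : row r (frame_mx rho p) = Lam_row rho [::] p by apply/rowP => j; rewrite !mxE r0.
  exact: Lam_row_sub_Espace.
have kn : (r.-1 < n)%N by lia.
have -> : row r (frame_mx rho p) = Lam_row rho [:: Ordinal kn] p.
  by apply/rowP => j; rewrite !mxE (negbTE r0).
exact: Lam_row_sub_Espace.
Qed.

Lemma det_Delta_mx_neq0 (s : seq 'I_n) (p : Pt R n) : (0 < n)%N ->
  row_free (frame_mx rho p) -> ~~ (Lam_row rho s p <= frame_mx rho p)%MS ->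
  \det (Delta_mx rho s p) != 0.
Proof.
move=> n_gt0 frame_free row_notin; rewrite -unitfE -unitmxE -row_full_unit -sub1mx.
apply: submx_trans (_ : frame_mx rho p + Lam_row rho s p <= _)%MS.
  by rewrite sub1mx; exact: row_full_adds_row.
rewrite addsmx_sub; apply/andP; split.
  apply/row_subP => r.
  suff -> : row r (frame_mx rho p) = row (widen_ord (leqnSn n) r) (Delta_mx rho s p).
    exact: row_sub.
  by apply/rowP => j; rewrite !mxE /= ltn_ord.
have -> : Lam_row rho s p = row ord_max (Delta_mx rho s p).
  by apply/rowP => j; rewrite !mxE /= ltnn (gtn_eqF n_gt0).
exact: row_sub.
Qed.

End DeltaMatrix.

Theorem lemma5p1 (R : realType) (n : nat) (rho : Pt R n -> R) (l : nat) :
  (2 <= n)%N ->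
  smooth_near0 rho ->
  (* rho = model + phi with phi = O(|W|^3) near 0 *)
  (exists2 C : R, 0 < C & exists2 delta : R, 0 < delta &
     forall p : Pt R n, `|p| < delta -> `|rho p - model p| <= C * `|p| ^+ 3) ->
  (2 <= l)%N ->
  k_nondegenerate rho l 0 ->
  exists s : seq 'I_n,
    [/\ size s = l, sorted (fun a b : 'I_n => (a <= b)%N) s &
        \det (Delta_mx rho s 0) != 0].
Proof.
move=> n2 rho_smooth rho_model l2 [E_neq /andP[_ E_full]].
set F := frame_mx rho 0.
have F_free : row_free F := row_free_frame_mx0 rho_smooth rho_model.
have F_sub : (F <= Espace rho l.-1 0)%MS by apply: frame_sub_Espace; lia.
have E_pred_not_full : ~~ row_full (Espace rho l.-1 0).
  apply: contra E_neq; rewrite -sub1mx => E_pred_full.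
  by apply/andP; split; [apply: submx_trans E_full | apply: submx_trans E_pred_full];
    exact: submx1.
have E_pred_sub := row_free_hyperplane_sub F_free F_sub E_pred_not_full.
apply: contrapT => no_s.
have : (Espace rho l 0 <= F)%MS.
  apply: Espace_sub E_pred_sub _ => [|s s_size s_sorted]; first lia.
  apply: contraT => s_notin; exfalso; apply: no_s; exists s; split => //.
  by apply: det_Delta_mx_neq0 => //; lia.
move=> /(submx_trans E_full)/mxrankS; rewrite mxrank1.
by have := rank_leq_row F; lia.
Qed.
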